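(* Let $z\in\mathbb{C}$, $x=e^{2\pi iz}$, and let $\omega_0,\dots,\omega_r\in\mathbb{C}$ with $\omega_0,\dots,\omega_r,\omega_0+\omega_1\in\mathbb{C}\setminus\mathbb{R}$, $q_j=e^{2\pi i\omega_j}$. Then $$\frac{(x|q_0,q_1,q_2,\dots,q_r)_\infty}{(x|q_0,q_0q_1,q_2,\dots,q_r)_\infty}=(x|q_1^{-1},q_0q_1,q_2,\dots,q_r)_\infty^{-1}.$$
   Context: q-shifted factorial: for $q_j=e^{2\pi i\omega_j}$ with $\omega_j\in\mathbb{C}\setminus\mathbb{R}$: if all $|q_j|<1$, $(x|q_0,\dots,q_r)_\infty=\prod_{j_0,\dots,j_r\ge0}(1-xq_0^{j_0}\cdots q_r^{j_r})$; in general (the expression is symmetric in the $q_j$), if $|q_0|,\dots,|q_{k-1}|>1$ and $|q_k|,\dots,|q_r|<1$, $(x|\underline q)_\infty=\big((q_0\cdots q_{k-1})^{-1}x\,|\,q_0^{-1},\dots,q_{k-1}^{-1},q_k,\dots,q_r\big)_\infty^{(-1)^k}$, the latter product being absolutely convergent. *)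

From HB Require Import structures.
From mathcomp Require Import all_boot all_order all_algebra.
From mathcomp Require Import complex.
From mathcomp Require Import all_classical all_reals all_analysis.
Set Implicit Arguments. Unset Strict Implicit. Unset Printing Implicit Defensive.
Import Order.TTheory GRing.Theory Num.Theory.
Import numFieldNormedType.Exports.
Local Open Scope ring_scope.
Local Open Scope complex_scope.
Local Open Scope classical_set_scope.

(* e(w) = exp(2 pi i w) = exp(-2 pi complex.Im w) (cos (2 pi complex.Re w) + i sin (2 pi complex.Re w)) *)
Definition e2pi {R : realType} (w : R[i]) : R[i] :=
  (expR (- (2 * pi * complex.Im w)))%:C *
  ((cos (2 * pi * complex.Re w)) +i* (sin (2 * pi * complex.Re w))).

Definition qpoch_box {R : realType} (x : R[i]) (qs : seq R[i]) (N : nat) : R[i] :=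
  \prod_(j : {ffun 'I_(size qs) -> 'I_N})
     (1 - x * \prod_(i < size qs) (nth 0 qs i) ^+ (j i)).

(* The (absolutely convergent, when all |q_j| < 1) infinite product
   (x | q_0, ..., q_r)_oo, as the limit of its box partial products. *)
Definition qpoch_conv {R : realType} (x : R[i]) (qs : seq R[i]) : R[i] :=
  lim ((qpoch_box x qs : nat -> (R[i])^o) @ \oo).

(* General q-shifted factorial: with S the set of q_j with |q_j| > 1 and
   k = #S, (x|q)_oo = ((prod_{j in S} q_j)^{-1} x | q_j^{-1} (j in S), q_j (j notin S))_oo^{(-1)^k}. *)
Definition qpoch {R : realType} (x : R[i]) (qs : seq R[i]) : R[i] :=
  let big := [seq q <- qs | 1 < `|q|] in
  let qs' := [seq (if 1 < `|q| then q^-1 else q) | q <- qs] in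
  let y := (\prod_(q <- big) q)^-1 * x in
  if odd (size big) then (qpoch_conv y qs')^-1 else qpoch_conv y qs'.

From HB Require Import structures.
From mathcomp Require Import all_boot all_order all_algebra.
From mathcomp Require Import complex.
From mathcomp Require Import all_classical all_reals all_analysis.
From mathcomp Require Import ring lra zify.
Set Implicit Arguments. Unset Strict Implicit. Unset Printing Implicit Defensive.
Import Order.TTheory GRing.Theory Num.Theory.
Import numFieldNormedType.Exports.
Local Open Scope ring_scope.
Local Open Scope complex_scope.
Local Open Scope classical_set_scope.

(* When all |q_j| < 1, (x|q)_oo is the limit of the finite products over the
   boxes [0,N)^(r+1); since the sum of |x q^j| converges, any exhaustion of
   N^(r+1) by finite sets gives the same limit, so factors can be regrouped
   freely.  Splitting N^2 into {j0 >= j1} and {j0 < j1} through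
   (a, b) |-> (a + b, b) and (a, b) |-> (b, a + b + 1) gives
     (x|u,v,T)_oo = (x|u,uv,T)_oo (vx|v,uv,T)_oo     for |u|, |v| < 1.
   For the general q-shifted factorial, (ax|a,L)_oo = (x|a^-1,L)_oo^-1.  This
   inversion moves any of u, v, uv into the unit disc, so in each of the six
   possible regimes of |u|, |v|, |uv| the splitting identity is an instance of
   the disc case, and with u = q0, v = q1 it is the claimed ratio. *)

Local Notation normc := Normc.normc.

Section ComplexNorm.
Variable R : realType.
Implicit Types z a b : R[i].

Lemma normc_ge0 z : 0 <= normc z.
Proof. by case: z => a b; rewrite sqrtr_ge0. Qed.

Lemma normcB_le a b : normc (a - b) <= normc a + normc b.
Proof. by rewrite (le_trans (le_normcD _ _)) // normcN. Qed.

Lemma normc_prod (I : Type) (r : seq I) (F : I -> R[i]) :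
  normc (\prod_(i <- r) F i) = \prod_(i <- r) normc (F i).
Proof. exact: (big_morph _ (@Normc.normcM R) (Normc.normc1 R)). Qed.

Lemma normcX z k : normc (z ^+ k) = normc z ^+ k.
Proof. by elim: k => [|k IH]; rewrite ?expr0 ?Normc.normc1 // !exprS Normc.normcM IH. Qed.

Lemma normcE z : `|z| = (normc z)%:C.
Proof. by []. Qed.

Lemma normc_gt1_neq0 z : 1 < normc z -> z != 0.
Proof. by apply: contraTneq => ->; rewrite Normc.normc0 ltr10. Qed.

Lemma normc_neq1P z : normc z != 1 -> normc z < 1 \/ 1 < normc z.
Proof. by rewrite neq_lt => /orP. Qed.

Lemma ltc1_normc z : (1 < `|z|) = (1 < normc z).
Proof. by rewrite normcE ltcR. Qed.

Lemma normcV_lt1 z : 1 < normc z -> normc z^-1 < 1.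
Proof. by move=> z_big; rewrite Normc.normcV invf_lt1 // (lt_trans ltr01 z_big). Qed.

Lemma normcV_gt1 z : z != 0 -> normc z < 1 -> 1 < normc z^-1.
Proof.
move=> z0 z_small; rewrite Normc.normcV invf_gt1 // lt_neqAle normc_ge0 andbT eq_sym.
by apply: contra z0 => /eqP/Normc.eq0_normc ->.
Qed.

Lemma normcV_neq1 z : normc z != 1 -> normc z^-1 != 1.
Proof. by rewrite Normc.normcV invr_eq1. Qed.

Lemma ReB a b : complex.Re (a - b) = complex.Re a - complex.Re b.
Proof. by case: a; case: b. Qed.

Lemma ImB a b : complex.Im (a - b) = complex.Im a - complex.Im b.
Proof. by case: a; case: b. Qed.

Lemma normc_Re z : `|complex.Re z| <= normc z.
Proof.
case: z => a b /=; rewrite -sqrtr_sqr ler_sqrt ?addr_ge0 ?sqr_ge0 //.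
by rewrite lerDl sqr_ge0.
Qed.

Lemma normc_Im z : `|complex.Im z| <= normc z.
Proof.
case: z => a b /=; rewrite -sqrtr_sqr ler_sqrt ?addr_ge0 ?sqr_ge0 //.
by rewrite lerDr sqr_ge0.
Qed.

Lemma normc_le_ReIm z : normc z <= `|complex.Re z| + `|complex.Im z|.
Proof.
case: z => a b; rewrite (_ : a +i* b = (a +i* 0) + (0 +i* b)); last first.
  by rewrite /GRing.add /= addr0 add0r.
apply: (le_trans (le_normcD _ _)).
by rewrite /= expr0n /= !addr0 !add0r !sqrtr_sqr.
Qed.

End ComplexNorm.

Section ComplexLimits.
Variable R : realType.

Lemma cvgC_normcP (z : nat -> (R[i])^o) (L : (R[i])^o) :
  z @ \oo --> L <-> forall e : R, 0 < e -> \forall n \near \oo, normc (L - z n) < e.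
Proof.
split=> [/cvgrPdist_lt zL e e0 | zL].
  by apply: filterS (zL e%:C _) => [n|]; rewrite ?normcE ltcR.
apply/cvgrPdist_lt => e; rewrite ltcE /= => /andP[/eqP Im_e Re_e].
have -> : e = (complex.Re e)%:C by case: e Im_e {Re_e} => a b /= ->.
by apply: filterS (zL _ Re_e) => n; rewrite normcE ltcR.
Qed.

Lemma cauchy_bound_cvg (u e : nat -> R) :
  (forall eps, 0 < eps -> \forall n \near \oo, e n < eps) ->
  (forall n m, `|u n - u m| <= e n + e m) -> cvg (u @ \oo).
Proof.
move=> e_small u_close; apply: cauchy_cvg; apply: cauchy_exP => eps eps0.
have [N _ eN] := e_small (eps / 2) ltac:(by rewrite divr_gt0).
exists (u N), N => // n /= Nn; rewrite -ball_normE /ball_ /=.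
have := u_close N n; have := eN N (leqnn N); have := eN n Nn; lra.
Qed.

Lemma cauchy_bound_cvgC (z : nat -> (R[i])^o) (e : nat -> R) :
  (forall eps, 0 < eps -> \forall n \near \oo, e n < eps) ->
  (forall n m, normc (z n - z m) <= e n + e m) -> cvg (z @ \oo).
Proof.
move=> e_small z_close.
have /cvgrPdist_lt Re_cvg : cvg ((fun n => complex.Re (z n)) @ \oo).
  apply: cauchy_bound_cvg e_small _ => n m.
  by rewrite -ReB (le_trans (normc_Re _)).
have /cvgrPdist_lt Im_cvg : cvg ((fun n => complex.Im (z n)) @ \oo).
  apply: cauchy_bound_cvg e_small _ => n m.
  by rewrite -ImB (le_trans (normc_Im _)).
apply/cvg_ex.
exists (lim ((fun n => complex.Re (z n)) @ \oo) +i* lim ((fun n => complex.Im (z n)) @ \oo)).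
apply/cvgC_normcP => eps eps0.
have eps2 : 0 < eps / 2 by rewrite divr_gt0.
near=> n; rewrite (le_lt_trans (normc_le_ReIm _)) // ReB ImB /= (splitr eps).
by rewrite ltrD //; near: n; [apply: Re_cvg | apply: Im_cvg].
Unshelve. all: by end_near.
Qed.

End ComplexLimits.

Lemma perm_subset_cat (T : eqType) (s t : seq T) :
  uniq s -> uniq t -> {subset s <= t} -> perm_eq t (s ++ [seq i <- t | i \notin s]).
Proof.
move=> us ut st; apply: uniq_perm => //.
  rewrite cat_uniq us filter_uniq // andbT /=.
  by apply/hasPn => i; rewrite mem_filter => /andP[].
by move=> i; rewrite mem_cat mem_filter; case si: (i \in s) => //=; rewrite st.
Qed.

Section PartialProducts.
Variables (R : realType) (I : eqType).

Definition pprod (f : I -> R[i]) (s : seq I) : R[i] := \prod_(i <- s) (1 - f i).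
Definition pmaj (f : I -> R[i]) (s : seq I) : R := \prod_(i <- s) (1 + normc (f i)).

Variable f : I -> R[i].

Lemma pmaj_ge1 s : 1 <= pmaj f s.
Proof.
rewrite /pmaj; elim: s => [|i s IH]; rewrite ?big_nil ?big_cons //.
by rewrite mulr_ege1 // lerDl normc_ge0.
Qed.

Lemma normc_pprod_le s : normc (pprod f s) <= pmaj f s.
Proof.
rewrite /pprod /pmaj; elim: s => [|i s IH]; rewrite ?big_nil ?big_cons ?Normc.normc1 //.
rewrite Normc.normcM ler_pM ?normc_ge0 //.
by rewrite (le_trans (normcB_le _ _)) ?Normc.normc1.
Qed.

Lemma normc_pprod_sub1_le s : normc (pprod f s - 1) <= pmaj f s - 1.
Proof.
elim: s => [|i s IH]; first by rewrite /pprod /pmaj !big_nil !subrr Normc.normc0.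
rewrite /pprod /pmaj !big_cons -/(pprod f s) -/(pmaj f s).
have -> : (1 - f i) * pprod f s - 1 = (1 - f i) * (pprod f s - 1) - f i by ring.
have fi := normc_ge0 (f i).
have : normc ((1 - f i) * (pprod f s - 1)) <= (1 + normc (f i)) * (pmaj f s - 1).
  rewrite Normc.normcM ler_pM ?normc_ge0 //.
  by rewrite (le_trans (normcB_le _ _)) ?Normc.normc1.
by move: (normcB_le ((1 - f i) * (pprod f s - 1)) (f i)); lra.
Qed.

Section Subset.
Variables (s t : seq I).
Hypotheses (us : uniq s) (ut : uniq t) (st : {subset s <= t}).
Let d := [seq i <- t | i \notin s].

Lemma pmaj_subset : pmaj f s <= pmaj f t.
Proof.
rewrite /pmaj (perm_big _ (perm_subset_cat us ut st)) big_cat /=.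
by rewrite ler_peMr ?(le_trans ler01) ?pmaj_ge1.
Qed.

Lemma normc_pprod_subset : normc (pprod f t - pprod f s) <= pmaj f t - pmaj f s.
Proof.
rewrite /pprod /pmaj !(perm_big _ (perm_subset_cat us ut st)) !big_cat /=.
rewrite -/(pprod f s) -/(pprod f d) -/(pmaj f s) -/(pmaj f d).
have -> : pprod f s * pprod f d - pprod f s = pprod f s * (pprod f d - 1) by ring.
have -> : pmaj f s * pmaj f d - pmaj f s = pmaj f s * (pmaj f d - 1) by ring.
by rewrite Normc.normcM ler_pM ?normc_ge0 ?normc_pprod_le ?normc_pprod_sub1_le.
Qed.

End Subset.
End PartialProducts.

Section Exhaustions.
Variable I : eqType.

Definition exhaustion (S : nat -> seq I) :=
  [/\ forall N, uniq (S N), forall N, {subset S N <= S N.+1} & forall i, exists N, i \in S N].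

Lemma exhaustion_subset S N M : exhaustion S -> (N <= M)%N -> {subset S N <= S M}.
Proof.
case=> _ SS _ /subnKC <-; elim: (M - N)%N => [|k IH]; first by rewrite addn0.
by move=> i /IH; rewrite addnS; apply: SS.
Qed.

Lemma exhaustion_cover S (s : seq I) : exhaustion S -> exists N, {subset s <= S N}.
Proof.
move=> hS; have [_ _ Scov] := hS; elim: s => [|i s [N sN]]; first by exists 0%N.
have [M iM] := Scov i; exists (maxn N M) => j; rewrite inE => /orP[/eqP->|/sN].
  exact: exhaustion_subset hS (leq_maxr N M) _ iM.
exact: exhaustion_subset hS (leq_maxl N M) j.
Qed.

End Exhaustions.

Section InfiniteProducts.
Variables (R : realType) (I : eqType).
Implicit Types (f : I -> R[i]) (S : nat -> seq I).

Definition pmaj_bounded f := exists B, forall s, uniq s -> pmaj f s <= B.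

Definition iprod f S : R[i] := lim ((fun N => pprod f (S N) : (R[i])^o) @ \oo).

Section Bounded.
Variable f : I -> R[i].
Hypothesis f_bounded : pmaj_bounded f.

Let pmaj_uniq := [set pmaj f s | s in [set s | uniq s]].
Let M := sup pmaj_uniq.

Let pmaj_uniq_has_sup : has_sup pmaj_uniq.
Proof.
split; first by exists (pmaj f [::]), [::].
by have [B fB] := f_bounded; exists B => _ [s us <-]; apply: fB.
Qed.

Let pmaj_le_sup s : uniq s -> pmaj f s <= M.
Proof. by move=> us; apply: ub_le_sup pmaj_uniq_has_sup.2 _ _; exists s. Qed.

Let pmaj_exhaustion_sup S : exhaustion S ->
  forall e, 0 < e -> \forall N \near \oo, M - pmaj f (S N) < e.
Proof.
move=> hS e e0; have [uS _ _] := hS.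
have [_ [s us <-] Ms] := sup_adherent e0 pmaj_uniq_has_sup.
have [N0 sS] := exhaustion_cover s hS.
exists N0 => // N /= N0N.
have := pmaj_subset f us (uS N) (fun i si => exhaustion_subset hS N0N (sS i si)).
by rewrite -/M in Ms; lra.
Qed.

Let normc_pprodB_le s t : uniq s -> uniq t ->
  normc (pprod f s - pprod f t) <= (M - pmaj f s) + (M - pmaj f t).
Proof.
move=> us ut; set U := undup (s ++ t).
have uU : uniq U := undup_uniq _.
have sU : {subset s <= U} by move=> i si; rewrite mem_undup mem_cat si.
have tU : {subset t <= U} by move=> i ti; rewrite mem_undup mem_cat ti orbT.
have := normc_pprod_subset f us uU sU; have := normc_pprod_subset f ut uU tU.
have := pmaj_le_sup uU.
have -> : pprod f s - pprod f t = - (pprod f U - pprod f s) + (pprod f U - pprod f t) by ring.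
by move: (le_normcD (- (pprod f U - pprod f s)) (pprod f U - pprod f t)); rewrite normcN; lra.
Qed.

Lemma iprod_cvg S : exhaustion S ->
  (fun N => pprod f (S N) : (R[i])^o) @ \oo --> (iprod f S : (R[i])^o).
Proof.
move=> hS; have [uS _ _] := hS.
apply: (cauchy_bound_cvgC (pmaj_exhaustion_sup hS)) => N N'.
exact: normc_pprodB_le (uS N) (uS N').
Qed.

Lemma iprod_exhaustion S S' : exhaustion S -> exhaustion S' -> iprod f S' = iprod f S.
Proof.
move=> hS hS'; have [uS _ _] := hS; have [uS' _ _] := hS'.
suff : (fun N => pprod f (S' N) : (R[i])^o) @ \oo --> (iprod f S : (R[i])^o).
  exact: cvg_lim.
apply/cvgC_normcP => e e0.
have e3 : 0 < e / 3 by rewrite divr_gt0.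
have close := (cvgC_normcP _ _).1 (iprod_cvg hS) _ e3.
near=> N.
have -> : iprod f S - pprod f (S' N) =
    (iprod f S - pprod f (S N)) + (pprod f (S N) - pprod f (S' N)) by ring.
rewrite (le_lt_trans (le_normcD _ _)) //.
have := normc_pprodB_le (uS N) (uS' N).
have : normc (iprod f S - pprod f (S N)) < e / 3 by near: N; exact: close.
have : M - pmaj f (S N) < e / 3 by near: N; exact: pmaj_exhaustion_sup.
have : M - pmaj f (S' N) < e / 3 by near: N; exact: pmaj_exhaustion_sup.
lra.
Unshelve. all: by end_near.
Qed.

End Bounded.
End InfiniteProducts.

Section Reindexing.
Variables (R : realType) (I : eqType) (S : nat -> seq I).
Hypothesis hS : exhaustion S.
Implicit Types (f g h : I -> R[i]) (p : I -> I).

Lemma pmaj_bounded_comp f g p :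
  pmaj_bounded f -> injective p -> f \o p =1 g -> pmaj_bounded g.
Proof.
move=> [B fB] p_inj fpg; exists B => s us.
rewrite (_ : pmaj g s = pmaj f (map p s)) ?fB ?map_inj_uniq //.
by rewrite /pmaj big_map; apply: eq_bigr => i _; rewrite -fpg.
Qed.

Lemma iprod_reindex f g p :
  pmaj_bounded f -> bijective p -> f \o p =1 g -> iprod f S = iprod g S.
Proof.
move=> fB [q pK qK] fpg; have [uS SS Scov] := hS.
have p_inj := can_inj pK.
have hpS : exhaustion (fun N => map p (S N)).
  split=> [N | N _ /mapP[i iS ->] | i]; first by rewrite map_inj_uniq.
    by rewrite map_f ?SS.
  by have [N iS] := Scov (q i); exists N; rewrite -(qK i) map_f.
rewrite -(iprod_exhaustion fB hS hpS) /iprod /=.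
suff -> : (fun N => pprod f (map p (S N)) : (R[i])^o) = (fun N => pprod g (S N)) by [].
by apply: funext => N; rewrite /pprod big_map; apply: eq_bigr => i _; rewrite -fpg.
Qed.

Lemma iprod_split f g h (pg ph : I -> I) :
  pmaj_bounded f -> injective pg -> injective ph ->
  (forall a b, pg a != ph b) -> (forall d, exists a, d = pg a \/ d = ph a) ->
  f \o pg =1 g -> f \o ph =1 h -> iprod f S = iprod g S * iprod h S.
Proof.
move=> fB pg_inj ph_inj pgh_disj pgh_cov fpg fph; have [uS SS Scov] := hS.
set S' := fun N => map pg (S N) ++ map ph (S N).
have hS' : exhaustion S'.
  split=> [N | N i | d].
  - rewrite cat_uniq !map_inj_uniq // uS andbT /=.
    apply/hasPn => _ /mapP[b _ ->]; apply/mapP => -[a _ /eqP].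
    by rewrite eq_sym (negbTE (pgh_disj a b)).
  - by rewrite !mem_cat => /orP[] /mapP[a aS ->]; rewrite map_f ?SS ?orbT.
  - have [a [->|->]] := pgh_cov d; have [N aS] := Scov a;
      by exists N; rewrite mem_cat map_f ?orbT.
have pprod_S' N : pprod f (S' N) = pprod g (S N) * pprod h (S N).
  rewrite /pprod big_cat !big_map /=.
  by congr (_ * _); apply: eq_bigr => i _; rewrite -?fpg -?fph.
rewrite -(iprod_exhaustion fB hS hS').
suff : (fun N => pprod f (S' N) : (R[i])^o) @ \oo --> (iprod g S * iprod h S : (R[i])^o).
  exact: cvg_lim.
rewrite (funext pprod_S').
have gB := pmaj_bounded_comp fB pg_inj fpg; have hB := pmaj_bounded_comp fB ph_inj fph.
by apply: cvgM; apply: iprod_cvg.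
Qed.

End Reindexing.

Definition box n N : seq {ffun 'I_n -> nat} :=
  [seq [ffun i => nat_of_ord (j i)] | j : {ffun 'I_n -> 'I_N}].

Lemma mem_box n N c : (c \in box n N) = [forall i, c i < N]%N.
Proof.
apply/mapP/forallP => [[j _ ->] i | cN]; first by rewrite ffunE.
by exists [ffun i => Ordinal (cN i)]; rewrite ?mem_enum //; apply/ffunP => i; rewrite !ffunE.
Qed.

Lemma box_exhaustion n : exhaustion (box n).
Proof.
split=> [N | N c | c].
- rewrite map_inj_uniq ?enum_uniq // => j k /ffunP jk.
  by apply/ffunP => i; apply: val_inj; have := jk i; rewrite !ffunE.
- by rewrite !mem_box => /forallP cN; apply/forallP => i; exact: ltnW (cN i).
- exists (\sum_i c i).+1; rewrite mem_box; apply/forallP => i.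
  by rewrite ltnS (bigD1 i) //= leq_addr.
Qed.

Definition qterm {R : realType} (y : R[i]) (qs : seq R[i])
  (c : {ffun 'I_(size qs) -> nat}) : R[i] := y * \prod_(i < size qs) qs`_i ^+ c i.
Arguments qterm {R} y qs c.

Section QpochConv.
Variable R : realType.
Implicit Types (y : R[i]) (qs : seq R[i]).

Lemma qpoch_convE y qs : qpoch_conv y qs = iprod (qterm y qs) (box (size qs)).
Proof.
rewrite /qpoch_conv /iprod.
suff -> : qpoch_box y qs = (fun N => pprod (qterm y qs) (box (size qs) N)) by [].
apply: funext => N; rewrite /qpoch_box /pprod /box big_map big_enum /=.
by apply: eq_bigr => j _; congr (1 - _ * _); apply: eq_bigr => i _; rewrite ffunE.
Qed.

Lemma geom_sum_le (a : R) N : 0 <= a < 1 -> \sum_(k < N) a ^+ k <= (1 - a)^-1.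
Proof.
case/andP => a0 a1; have a1' : 0 < 1 - a by rewrite subr_gt0.
rewrite -[leRHS]mulr1 ler_pdivlMl //.
have -> : (1 - a) * \sum_(k < N) a ^+ k = 1 - a ^+ N.
  by rewrite -[1 - a ^+ N]opprB subrX1 -mulNr opprB.
by rewrite gerBl exprn_ge0.
Qed.

Lemma pmaj_le_expR (I : eqType) (f : I -> R[i]) s :
  pmaj f s <= expR (\sum_(i <- s) normc (f i)).
Proof.
rewrite /pmaj; elim: s => [|i s IH]; rewrite ?big_nil ?big_cons ?expR0 //.
by rewrite expRD ler_pM ?expR_ge1Dx ?addr_ge0 ?normc_ge0 ?(le_trans ler01 (pmaj_ge1 f s)).
Qed.

Lemma qterm_bounded y qs : all (fun q => normc q < 1) qs -> pmaj_bounded (qterm y qs).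
Proof.
move=> qs_small; have [uB _ _] := box_exhaustion (size qs).
exists (expR (normc y * \prod_(i < size qs) (1 - normc qs`_i)^-1)) => s us.
have [N sN] := exhaustion_cover s (box_exhaustion (size qs)).
apply: le_trans (pmaj_subset _ us (uB N) sN) _; apply: le_trans (pmaj_le_expR _ _) _.
rewrite ler_expR /box big_map big_enum /=.
rewrite (eq_bigr (fun j : {ffun 'I_(size qs) -> 'I_N} =>
                    normc y * \prod_(i < size qs) normc qs`_i ^+ j i)); last first.
  move=> j _; rewrite /qterm Normc.normcM normc_prod; congr (_ * _).
  by apply: eq_bigr => i _; rewrite ffunE normcX.
rewrite -mulr_sumr ler_wpM2l ?normc_ge0 //.
rewrite (_ : \sum_(j in _) _ = \prod_(i < size qs) \sum_(k < N) normc qs`_i ^+ k); last first.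
  by rewrite bigA_distr_bigA.
rewrite ler_prod // => i _.
rewrite sumr_ge0 ?geom_sum_le //= => [|k _]; last by rewrite exprn_ge0 ?normc_ge0.
by rewrite normc_ge0 (allP qs_small) ?mem_nth.
Qed.

End QpochConv.

Section FirstTwoExponents.
Variables (R : realType) (T : seq R[i]).
Local Notation m := (size T).
Local Notation J := {ffun 'I_m.+2 -> nat}.
Let i1 : 'I_m.+2 := lift ord0 ord0.

Definition set01 (c : J) (a b : nat) : J :=
  [ffun i : 'I_m.+2 => if val i == 0%N then a else if val i == 1%N then b else c i].

Lemma set01_0 c a b : set01 c a b ord0 = a.
Proof. by rewrite ffunE. Qed.

Lemma set01_1 c a b : set01 c a b i1 = b.
Proof. by rewrite ffunE. Qed.

Lemma set01_gt1 c a b (i : 'I_m.+2) : (1 < i)%N -> set01 c a b i = c i.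
Proof. by rewrite ffunE; case: i => -[|[|k]]. Qed.

Lemma ffun01P (c d : J) : c ord0 = d ord0 -> c i1 = d i1 ->
  (forall i : 'I_m.+2, (1 < i)%N -> c i = d i) -> c = d.
Proof.
move=> c0 c1 c_gt1; apply/ffunP => -[[|[|k]] lt_k].
- by rewrite (_ : Ordinal lt_k = ord0) //; apply: val_inj.
- by rewrite (_ : Ordinal lt_k = i1) //; apply: val_inj.
- exact: c_gt1.
Qed.

Lemma set01_inj c c' a a' b b' : set01 c a b = set01 c' a' b' ->
  [/\ a = a', b = b' & forall i : 'I_m.+2, (1 < i)%N -> c i = c' i].
Proof.
move=> e; split=> [|| i lt1i].
- by rewrite -(set01_0 c a b) -(set01_0 c' a' b') e.
- by rewrite -(set01_1 c a b) -(set01_1 c' a' b') e.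
- by rewrite -(set01_gt1 c a b lt1i) -(set01_gt1 c' a' b' lt1i) e.
Qed.

Lemma set01_id c : set01 c (c ord0) (c i1) = c.
Proof. by apply: ffun01P; rewrite ?set01_0 ?set01_1 // => i /set01_gt1. Qed.

Lemma set01_set01 c a b a' b' : set01 (set01 c a b) a' b' = set01 c a' b'.
Proof.
by apply: ffun01P; rewrite ?set01_0 ?set01_1 // => i lt1i; rewrite !set01_gt1.
Qed.

Definition qtail (c : J) : R[i] := \prod_(i < m) T`_i ^+ c (lift ord0 (lift ord0 i)).

Lemma qtail_set01 c a b : qtail (set01 c a b) = qtail c.
Proof. by apply: eq_bigr => i _; rewrite ffunE. Qed.

Lemma qterm2 y a b c :
  qterm y [:: a, b & T] c = y * (a ^+ c ord0 * b ^+ c i1 * qtail c).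
Proof. by rewrite /qterm /= !big_ord_recl /= /qtail !mulrA. Qed.

Hypothesis T_small : all (fun q => normc q < 1) T.

Lemma qterm2_bounded y a b : normc a < 1 -> normc b < 1 ->
  pmaj_bounded (qterm y [:: a, b & T]).
Proof.
move=> a_small b_small; have := @qterm_bounded R y [:: a, b & T].
by rewrite /= a_small b_small T_small; apply.
Qed.

Lemma qpoch_conv_swap y a b : normc a < 1 -> normc b < 1 ->
  qpoch_conv y [:: a, b & T] = qpoch_conv y [:: b, a & T].
Proof.
move=> a_small b_small; rewrite !qpoch_convE.
pose p c := set01 c (c i1) (c ord0).
have pK : involutive p.
  by move=> c; rewrite /p set01_set01 set01_0 set01_1 set01_id.
apply: (iprod_reindex (box_exhaustion _) (qterm2_bounded y a_small b_small) (inv_bij pK)).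
by move=> c /=; rewrite !qterm2 /p set01_0 set01_1 qtail_set01; ring.
Qed.

Lemma qpoch_conv_split y u v : normc u < 1 -> normc v < 1 ->
  qpoch_conv y [:: u, v & T] =
    qpoch_conv y [:: u, u * v & T] * qpoch_conv (y * v) [:: v, u * v & T].
Proof.
move=> u_small v_small; rewrite !qpoch_convE.
pose pg c := set01 c (c ord0 + c i1)%N (c i1).
pose ph c := set01 c (c i1) (c ord0 + c i1).+1%N.
apply: (iprod_split (box_exhaustion _) (qterm2_bounded y u_small v_small)
                    (pg := pg) (ph := ph)).
- move=> c c' /set01_inj[e0 e1 e_gt1]; apply: ffun01P => //; lia.
- move=> c c' /set01_inj[e0 e1 e_gt1]; apply: ffun01P => //; lia.
- by move=> c c'; apply/eqP => /set01_inj[e0 e1 _]; lia.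
- move=> d; case: (leqP (d i1) (d ord0)) => d01.
    exists (set01 d (d ord0 - d i1)%N (d i1)); left.
    by rewrite /pg set01_set01 set01_0 set01_1 subnK // set01_id.
  exists (set01 d (d i1 - (d ord0).+1)%N (d ord0)); right.
  rewrite /ph set01_set01 set01_0 set01_1 -[in LHS](set01_id d).
  by congr set01; rewrite -addnS subnK.
- by move=> c /=; rewrite !qterm2 /pg set01_0 set01_1 qtail_set01 exprD exprMn; ring.
- by move=> c /=; rewrite !qterm2 /ph set01_0 set01_1 qtail_set01 !exprS exprD exprMn; ring.
Qed.

End FirstTwoExponents.

Section QpochIdentities.
Variable R : realType.
Implicit Types (x a b u v q : R[i]) (L : seq R[i]).

Lemma normc_flip_lt1 q : normc q != 1 -> normc (if 1 < `|q| then q^-1 else q) < 1.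
Proof.
rewrite ltc1_normc => /normc_neq1P[q_small | q_big]; last by rewrite q_big normcV_lt1.
by rewrite (lt_gtF q_small).
Qed.

Lemma flip_small L : all (fun q => normc q != 1) L ->
  all (fun q => normc q < 1) [seq (if 1 < `|q| then q^-1 else q) | q <- L].
Proof. by move=> /allP L1; apply/allP => _ /mapP[q qL ->]; apply/normc_flip_lt1/L1. Qed.

Lemma qpoch_inv_head x a L : 1 < normc a ->
  qpoch x (a :: L) = (qpoch (a^-1 * x) (a^-1 :: L))^-1.
Proof.
move=> a_big; rewrite /qpoch /= !ltc1_normc a_big (lt_gtF (normcV_lt1 a_big)) /=.
rewrite big_cons invfM -mulrA mulrCA.
by case: odd; rewrite /= ?invrK.
Qed.

Lemma qpoch_inv_head_sym x a L : a != 0 -> normc a != 1 ->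
  qpoch (a * x) (a :: L) = (qpoch x (a^-1 :: L))^-1.
Proof.
move=> a0 /normc_neq1P[a_small | a_big]; last by rewrite qpoch_inv_head // mulKf.
by rewrite [qpoch x _]qpoch_inv_head ?normcV_gt1 // !invrK.
Qed.

Lemma qpoch_swap x a b L : normc a != 1 -> normc b != 1 -> all (fun q => normc q != 1) L ->
  qpoch x [:: a, b & L] = qpoch x [:: b, a & L].
Proof.
move=> a1 b1 L1; rewrite /qpoch.
have ab_perm : perm_eq [:: a, b & L] [:: b, a & L] by apply/permP => p /=; rewrite addnCA.
rewrite (perm_big _ (perm_filter _ ab_perm)) (perm_size (perm_filter _ ab_perm)) /=.
by rewrite qpoch_conv_swap ?normc_flip_lt1 ?flip_small.
Qed.

Lemma qpoch_split x u v L : normc u < 1 -> normc v < 1 -> all (fun q => normc q != 1) L ->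
  qpoch x [:: u, v & L] = qpoch x [:: u, u * v & L] * qpoch (v * x) [:: v, u * v & L].
Proof.
move=> u_small v_small L1.
have uv_small : normc (u * v) < 1 by rewrite Normc.normcM mulr_ilt1 ?normc_ge0.
rewrite /qpoch /= !ltc1_normc (lt_gtF u_small) (lt_gtF v_small) (lt_gtF uv_small) /=.
rewrite qpoch_conv_split ?flip_small // [_ * x * v]mulrC [v * (_ * x)]mulrCA.
by case: (odd _); rewrite ?invfM.
Qed.

End QpochIdentities.

Section SplitAllRegimes.
Variables (R : realType) (x u v : R[i]) (L : seq R[i]).
Hypotheses (u1 : normc u != 1) (v1 : normc v != 1) (uv1 : normc (u * v) != 1).
Hypothesis L1 : all (fun q => normc q != 1) L.
(* Needed in the regimes where the disc identity yields one factor only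
   through an inverse (with the convention 0^-1 = 0). *)
Hypotheses (B0 : qpoch x [:: u, u * v & L] != 0) (P0 : qpoch (v * x) [:: v, u * v & L] != 0).

Let uV1 := normcV_neq1 u1.
Let vV1 := normcV_neq1 v1.
Let uvV1 := normcV_neq1 uv1.

Let qpoch_split_small_head : normc u < 1 ->
  qpoch x [:: u, v & L] = qpoch x [:: u, u * v & L] * qpoch (v * x) [:: v, u * v & L].
Proof.
move=> u_small; have [v_small | v_big] := normc_neq1P v1; first exact: qpoch_split.
have v0 := normc_gt1_neq0 v_big.
have [uv_small | uv_big] := normc_neq1P uv1.
- have hA : qpoch x [:: u, v & L] = (qpoch (v^-1 * x) [:: v^-1, u & L])^-1.
    by rewrite (qpoch_swap _ u1 v1 L1) (qpoch_inv_head _ _ v_big).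
  have hP : qpoch (v * x) [:: v, u * v & L] = (qpoch x [:: u * v, v^-1 & L])^-1.
    by rewrite (qpoch_inv_head _ _ v_big) (mulKf v0) (qpoch_swap _ vV1 uv1 L1).
  have := qpoch_split x uv_small (normcV_lt1 v_big) L1.
  rewrite (mulfK v0) [qpoch x [:: u * v, u & L]](qpoch_swap _ uv1 u1 L1) => K.
  by rewrite hA hP K invfM mulrA (divff B0) mul1r.
- have u0 : u != 0 by apply: contraTneq uv_big => ->; rewrite mul0r Normc.normc0 ltr10.
  set y := (u * v)^-1 * x.
  have hA : qpoch x [:: u, v & L] = (qpoch (v^-1 * x) [:: u, v^-1 & L])^-1.
    by rewrite (qpoch_swap _ u1 v1 L1) (qpoch_inv_head _ _ v_big) (qpoch_swap _ vV1 u1 L1).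
  have hB : qpoch x [:: u, u * v & L] = (qpoch y [:: (u * v)^-1, u & L])^-1.
    by rewrite (qpoch_swap _ u1 uv1 L1) (qpoch_inv_head _ _ uv_big).
  have hP : qpoch (v * x) [:: v, u * v & L] = qpoch y [:: (u * v)^-1, v^-1 & L].
    rewrite (qpoch_inv_head _ _ v_big) (mulKf v0) (qpoch_swap _ vV1 uv1 L1).
    by rewrite (qpoch_inv_head _ _ uv_big) invrK.
  have := qpoch_split y (normcV_lt1 uv_big) u_small L1.
  have -> : (u * v)^-1 * u = v^-1 by field; rewrite ?u0 ?v0.
  have -> : u * y = v^-1 * x by rewrite /y; field; rewrite ?u0 ?v0.
  have P0' : qpoch y [:: (u * v)^-1, v^-1 & L] != 0 by rewrite -hP.
  by move=> K; rewrite hA hB hP K invfM mulrAC (mulVf P0') mul1r.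
Qed.

Let qpoch_split_big_head : 1 < normc u ->
  qpoch x [:: u, v & L] = qpoch x [:: u, u * v & L] * qpoch (v * x) [:: v, u * v & L].
Proof.
move=> u_big; have u0 := normc_gt1_neq0 u_big.
rewrite [qpoch x [:: u, v & L]](qpoch_inv_head _ _ u_big).
rewrite [qpoch x [:: u, u * v & L]](qpoch_inv_head _ _ u_big).
have [v_small | v_big] := normc_neq1P v1.
  have [uv_small | uv_big] := normc_neq1P uv1.
  - have := qpoch_split (u^-1 * x) (normcV_lt1 u_big) uv_small L1.
    have -> : u * v * (u^-1 * x) = v * x by field; rewrite ?u0.
    rewrite (mulKf u0) [qpoch (v * x) _](qpoch_swap _ uv1 v1 L1) => K.
    by rewrite K invfM -mulrA (mulVf P0) mulr1.
  - have v0 : v != 0 by apply: contraTneq uv_big => ->; rewrite mulr0 Normc.normc0 ltr10.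
    set y := u^-1 * x.
    have hB : qpoch y [:: u^-1, u * v & L] =
              (qpoch ((u * v)^-1 * y) [:: (u * v)^-1, u^-1 & L])^-1.
      by rewrite (qpoch_swap _ uV1 uv1 L1) (qpoch_inv_head _ _ uv_big).
    have hP : qpoch (v * x) [:: v, u * v & L] = (qpoch y [:: v, (u * v)^-1 & L])^-1.
      rewrite (qpoch_swap _ v1 uv1 L1) (qpoch_inv_head _ _ uv_big) (qpoch_swap _ uvV1 v1 L1).
      by congr (qpoch _ _)^-1; rewrite /y; field; rewrite ?u0 ?v0.
    have := qpoch_split y v_small (normcV_lt1 uv_big) L1.
    have -> : v * (u * v)^-1 = u^-1 by field; rewrite ?u0 ?v0.
    have B0' : qpoch ((u * v)^-1 * y) [:: (u * v)^-1, u^-1 & L] != 0.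
      by move: B0; rewrite (qpoch_inv_head _ _ u_big) hB invrK.
    move=> K; rewrite hB hP invrK K (qpoch_swap _ uV1 v1 L1).
    by rewrite (invfM (qpoch y _)) mulrCA (divff B0') mulr1.
have v0 := normc_gt1_neq0 v_big.
have uv_big : 1 < normc (u * v) by rewrite Normc.normcM (mulr_egt1 u_big v_big).
set y := (u * v)^-1 * x.
have := qpoch_split y (normcV_lt1 v_big) (normcV_lt1 u_big) L1.
rewrite -invfM [v * u]mulrC => K.
rewrite (qpoch_swap _ uV1 v1 L1) (qpoch_inv_head _ _ v_big) invrK mulrA -invfM [v * u]mulrC.
rewrite (qpoch_swap _ uV1 uv1 L1) (qpoch_inv_head _ _ uv_big) invrK mulrCA.
rewrite (qpoch_swap _ uvV1 uV1 L1) (qpoch_inv_head _ _ v_big) (mulKf v0).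
rewrite (qpoch_swap _ vV1 uv1 L1) (qpoch_inv_head _ _ uv_big) invrK (qpoch_swap _ uvV1 vV1 L1).
by rewrite K; apply: mulrC.
Qed.

Lemma qpoch_split_nonunit :
  qpoch x [:: u, v & L] = qpoch x [:: u, u * v & L] * qpoch (v * x) [:: v, u * v & L].
Proof.
by have [/qpoch_split_small_head | /qpoch_split_big_head] := normc_neq1P u1.
Qed.

End SplitAllRegimes.

Section ExponentialParametrization.
Variable R : realType.
Implicit Types w : R[i].

Lemma normc_e2pi w : normc (e2pi w) = expR (- (2 * pi * complex.Im w)).
Proof.
rewrite /e2pi Normc.normcM {2}/Normc.normc /= cos2Dsin2 sqrtr1 mulr1.
by rewrite /Normc.normc /= expr0n /= addr0 sqrtr_sqr ger0_norm ?expR_ge0.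
Qed.

Lemma e2pi_neq0 w : e2pi w != 0.
Proof.
apply: contraTneq (expR_gt0 (- (2 * pi * complex.Im w))) => w0.
by rewrite -normc_e2pi w0 Normc.normc0 ltxx.
Qed.

Lemma normc_e2pi_neq1 w : complex.Im w != 0 -> normc (e2pi w) != 1.
Proof.
move=> Imw; rewrite normc_e2pi -expR0 (inj_eq (@expR_inj R)) oppr_eq0.
by rewrite !mulf_neq0 ?pnatr_eq0 // gt_eqF ?pi_gt0.
Qed.

Lemma normc_e2piM w w' : normc (e2pi w * e2pi w') = normc (e2pi (w + w')).
Proof.
rewrite Normc.normcM !normc_e2pi -expRD; congr expR.
by case: w w' => [a b] [c d] /=; ring.
Qed.

End ExponentialParametrization.

Theorem proposition2p2 (R : realType) (z w0 w1 : R[i]) (ws : seq R[i]) :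
  complex.Im w0 != 0 -> complex.Im w1 != 0 -> complex.Im (w0 + w1) != 0 ->
  all (fun w => complex.Im w != 0) ws ->
  let x := e2pi z in
  let q0 := e2pi w0 in
  let q1 := e2pi w1 in
  let qs := [seq e2pi w | w <- ws] in
  qpoch x [:: q0, q0 * q1 & qs] != 0 ->
  qpoch x [:: q1^-1, q0 * q1 & qs] != 0 ->
  qpoch x [:: q0, q1 & qs] / qpoch x [:: q0, q0 * q1 & qs]
    = (qpoch x [:: q1^-1, q0 * q1 & qs])^-1.
Proof.
move=> Im0 Im1 Im01 Imws x q0 q1 qs B0 C0.
have qs1 : all (fun q => normc q != 1) qs.
  by apply/allP => _ /mapP[w wws ->]; apply/normc_e2pi_neq1/(allP Imws).
have q01 : normc (q0 * q1) != 1 by rewrite normc_e2piM normc_e2pi_neq1.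
have P_eq := qpoch_inv_head_sym x [:: q0 * q1 & qs] (e2pi_neq0 w1) (normc_e2pi_neq1 Im1).
have P0 : qpoch (q1 * x) [:: q1, q0 * q1 & qs] != 0 by rewrite P_eq invr_eq0.
rewrite -P_eq (qpoch_split_nonunit (normc_e2pi_neq1 Im0) (normc_e2pi_neq1 Im1) q01 qs1 B0 P0).
by rewrite mulrC mulKf.
Qed.
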